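(* For every $\varepsilon>0$ there exists $C_\varepsilon>0$ (independent of $N$) such that for any $A\subset\mathbb{Z}^2$ with $|A|\le|\{p\in\mathbb{Z}^2:|p|\le2k_{\mathrm F}\}|$, $$\hbar^2\sum_{p\in A}e(p)^{-1}\le C_\varepsilon N^\varepsilon.$$
   Context: $N=|B_{\mathrm F}|$ with $B_{\mathrm F}=\{k\in\mathbb{Z}^2:|k|<k_{\mathrm F}\}$, where $k_{\mathrm F}>0$ satisfies $k_{\mathrm F}^2=\frac12(\inf_{p\in\mathbb{Z}^2\setminus B_{\mathrm F}}|p|^2+\sup_{q\in B_{\mathrm F}}|q|^2)$; $\hbar=N^{-1/2}$; $e(p)=\hbar^2||p|^2-k_{\mathrm F}^2|$ for $p\in\mathbb{Z}^2$. *)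

From Stdlib Require Import Reals Lra ZArith List.
Open Scope R_scope.

Definition znorm (p : Z * Z) : R :=
  sqrt (IZR (fst p) ^ 2 + IZR (snd p) ^ 2).

Definition inBF (kF : R) (k : Z * Z) : Prop := znorm k < kF.

Definition is_inf (S : R -> Prop) (m : R) : Prop :=
  (forall x, S x -> m <= x) /\ (forall m', (forall x, S x -> m' <= x) -> m' <= m).
Definition is_sup (S : R -> Prop) (m : R) : Prop := is_lub S m.

Definition fermi_momentum (kF : R) : Prop :=
  0 < kF /\
  exists i s,
    is_inf (fun x => exists p, ~ inBF kF p /\ x = znorm p ^ 2) i /\
    is_sup (fun x => exists q, inBF kF q /\ x = znorm q ^ 2) s /\
    kF ^ 2 = (i + s) / 2.

Definition has_card (P : Z * Z -> Prop) (n : nat) : Prop :=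
  exists l : list (Z * Z), NoDup l /\ (forall x, In x l <-> P x) /\ length l = n.

Definition hbar (N : nat) : R := / sqrt (INR N).

Definition e_kin (N : nat) (kF : R) (p : Z * Z) : R :=
  hbar N ^ 2 * Rabs (znorm p ^ 2 - kF ^ 2).

Definition sum_inv_e (N : nat) (kF : R) (A : list (Z * Z)) : R :=
  fold_right (fun p acc => / e_kin N kF p + acc) 0 A.

(* Since [hbar^2 e(p)^{-1} = 1/||p|^2 - kF^2|], we bound [sum_A 1/||p|^2 - kF^2|].  The choice
   of [kF] keeps [kF^2] at distance [>= 1/2] from every integer [|p|^2], so the sum is at most
   [4 sum_k #level_k/(k+1)], level [k] being the points with [||p|^2 - c| = k] for an integer
   [c] near [kF^2].  Each level lies on two lattice circles, and the circle [|p|^2 = n] carries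
   at most [4 d(n)^2 = O(n^eps)] lattice points: representations with [gcd = g] are [g] times
   primitive ones of [n/g^2], and primitive representations of [m] with the same divisor
   [gcd(a b0 - b a0, m)] of [m] are associates in [Z[i]].  As [kF^2] and [|A|] are polynomial
   in [N], the sum is [O(N^eps log N)]. *)

From Stdlib Require Import Reals ZArith List Lra Lia Znumtheory.
From mathcomp Require ssreflect ssrfun ssrbool eqtype ssrnat seq path div prime bigop.
Import ListNotations.
Open Scope R_scope.

Lemma ln_le_compat x y : 0 < x -> x <= y -> ln x <= ln y.
Proof. intros x_pos [lt | <-]; [left; apply ln_increasing; auto | lra]. Qed.

Lemma Rpower_pos x y : 0 < Rpower x y.
Proof. apply exp_pos. Qed.

Lemma Rpower_1_l e : Rpower 1 e = 1.
Proof. unfold Rpower. rewrite ln_1, Rmult_0_r. apply exp_0. Qed.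

Lemma Rpower_ge1 x e : 1 <= x -> 0 <= e -> 1 <= Rpower x e.
Proof. intros x_ge1 e_ge0. rewrite <- (Rpower_1_l e). apply Rle_Rpower_l; lra. Qed.

Lemma ln_le_Rpower_div y e : 0 < y -> 0 < e -> ln y <= Rpower y e / e.
Proof.
intros y_pos e_pos. pose proof (exp_ineq1_le (e * ln y)).
apply Rmult_le_reg_l with e; [lra|].
unfold Rpower, Rdiv. replace (e * (exp (e * ln y) * / e)) with (exp (e * ln y)) by (field; lra).
set (t := e * ln y) in *. lra.
Qed.

(** * The divisor bound *)

Lemma INR_succ_le_pow2 n : INR (S n) <= 2 ^ n.
Proof.
induction n as [|n IH]; [simpl; lra|].
assert (1 <= 2 ^ n) by (apply pow_R1_Rle; lra).
rewrite S_INR. change (2 ^ S n) with (2 * 2 ^ n). lra.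
Qed.

(* [p^(e eps) >= 1 + e eps ln p >= 1 + e eps ln 2]. *)
Lemma INR_succ_le_Rpower eps p e : 0 < eps -> 2 <= p ->
  INR (S e) <= (1 + / (eps * ln 2)) * Rpower p (INR e * eps).
Proof.
intros eps_pos p_ge2.
assert (ln2_pos : 0 < ln 2) by (pose proof ln_lt_2; lra).
assert (ln_p_ge : ln 2 <= ln p) by (apply ln_le_compat; lra).
set (d := eps * ln 2).
assert (d_pos : 0 < d) by (unfold d; nra).
assert (e_ge0 : 0 <= INR e) by apply pos_INR.
assert (exp_lin : 1 + INR e * d <= Rpower p (INR e * eps)).
{ unfold Rpower. eapply Rle_trans; [|apply exp_ineq1_le].
  assert (0 <= INR e * eps * (ln p - ln 2)) by (apply Rmult_le_pos; nra). unfold d. nra. }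
assert (inv_d : / d * d = 1) by (field; lra).
assert (0 < / d) by (apply Rinv_0_lt_compat; lra).
rewrite S_INR. nra.
Qed.

Lemma INR_succ_le_Rpower_large eps p e : 0 < p -> 2 <= Rpower p eps ->
  INR (S e) <= Rpower p (INR e * eps).
Proof.
intros p_pos p_eps_ge2.
rewrite Rmult_comm, <- Rpower_mult, Rpower_pow by apply Rpower_pos.
eapply Rle_trans; [apply INR_succ_le_pow2|]. apply pow_incr; lra.
Qed.

Lemma Rmult_le_compat_pair a b x y u v : 0 <= a -> 0 <= b ->
  a <= x * u -> b <= y * v -> a * b <= x * y * (u * v).
Proof.
intros. replace (x * y * (u * v)) with ((x * u) * (y * v)) by ring.
apply Rmult_le_compat; auto.
Qed.

Module DivisorCount.
Import ssreflect ssrfun ssrbool eqtype ssrnat seq path div prime bigop.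
Local Open Scope nat_scope.

Lemma size_add_divisors f divs :
  size (PrimeDecompAux.add_divisors f divs) = f.2.+1 * size divs.
Proof.
case: f => p e /=; elim: e => [|e IH] /=; first by rewrite mul1n.
by rewrite size_merge size_cat size_map IH mulSn addnC.
Qed.

Lemma size_divisors n : size (divisors n) = \prod_(f <- prime_decomp n) f.2.+1.
Proof.
rewrite /divisors; elim: (prime_decomp n) => [|f pd IH] /=; first by rewrite big_nil.
by rewrite big_cons size_add_divisors IH.
Qed.

Lemma size_divisors_dvd m n : 0 < n -> m %| n -> size (divisors m) <= size (divisors n).
Proof.
move=> n_gt0 m_dvd_n; have m_gt0 : 0 < m by apply: dvdn_gt0 m_dvd_n.
apply: uniq_leq_size; first exact: divisors_uniq.
by move=> d; rewrite -!dvdn_divisors // => /dvdn_trans; apply.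
Qed.

Lemma INR_muln a b : INR (a * b) = (INR a * INR b)%R.
Proof. by rewrite -multE mult_INR. Qed.

Lemma INR_expn a b : INR (a ^ b) = (INR a ^ b)%R.
Proof. by elim: b => [|b IH]; rewrite ?expn0 // expnS INR_muln IH. Qed.

Lemma count_small_primes P0 n :
  count (fun f : nat * nat => f.1 < P0) (prime_decomp n) <= P0.
Proof.
have -> : count (fun f : nat * nat => f.1 < P0) (prime_decomp n) = count (ltn^~ P0) (primes n).
  by rewrite /primes count_map.
have small : {subset filter (ltn^~ P0) (primes n) <= iota 0 P0}.
  by move=> p; rewrite mem_filter mem_iota add0n => /andP[].
rewrite -size_filter -[X in _ <= X](size_iota 0).
exact: uniq_leq_size (filter_uniq _ (primes_uniq n)) small.
Qed.

Lemma INR_prod_succ_le {eps P0 c} : (1 <= c)%R ->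
  (forall p e, prime p -> p < P0 -> (INR e.+1 <= c * Rpower (INR p) (INR e * eps))%R) ->
  (forall p e, prime p -> P0 <= p -> (INR e.+1 <= Rpower (INR p) (INR e * eps))%R) ->
  forall pd : seq (nat * nat), all (fun f => prime f.1) pd ->
  (INR (\prod_(f <- pd) f.2.+1) <=
     c ^ count (fun f : nat * nat => f.1 < P0)%N pd * Rpower (INR (\prod_(f <- pd) f.1 ^ f.2)) eps)%R.
Proof.
move=> c_ge1 small large; elim=> [|[p e] pd IH] /=.
  by rewrite !big_nil /= Rpower_1_l; lra.
move=> /andP[p_prime all_prime]; rewrite !big_cons /= !INR_muln INR_expn.
have p_gt0 : (0 < INR p)%R by apply/lt_0_INR/ltP/prime_gt0.
have rest_gt0 : (0 < INR (\prod_(f <- pd) f.1 ^ f.2))%R.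
  apply/lt_0_INR/ltP; rewrite big_seq; apply: prodn_cond_gt0 => f f_in.
  by rewrite expn_gt0 prime_gt0 //; move/allP: all_prime; apply.
rewrite -Rpower_mult_distr //; last exact: pow_lt.
rewrite -(Rpower_pow e _ p_gt0) Rpower_mult pow_add.
have IHpd := IH all_prime.
have succ_ge0 : (0 <= INR e.+1)%R by apply: pos_INR.
have prod_ge0 : (0 <= INR (\prod_(f <- pd) f.2.+1))%R by apply: pos_INR.
case: (ltnP p P0) => hp.
- rewrite (_ : (c ^ true = c)%R); last by rewrite pow_1.
  exact: Rmult_le_compat_pair (small _ _ p_prime hp) IHpd.
- rewrite (_ : (c ^ false = 1)%R); last by [].
  apply: Rmult_le_compat_pair IHpd => //.
  by rewrite Rmult_1_l; apply: large.
Qed.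

(* Primes [p >= P0] have [p^eps >= 2], hence [e + 1 <= 2^e <= p^(e eps)]; each of the
   fewer than [P0] smaller primes costs at most a factor [c]. *)
Lemma size_divisors_bound eps : (0 < eps)%R -> exists C : R, (1 <= C)%R /\
  forall n, 0 < n -> (INR (size (divisors n)) <= C * Rpower (INR n) eps)%R.
Proof.
move=> eps_gt0.
have [P0 P0_large] := INR_unbounded (exp (ln 2 / eps)).
have ln2_gt0 : (0 < ln 2)%R by have := ln_lt_2; lra.
set c := (1 + / (eps * ln 2))%R.
have c_ge1 : (1 <= c)%R.
  have : (0 < / (eps * ln 2))%R by apply/Rinv_0_lt_compat; nra.
  rewrite /c; lra.
exists (c ^ P0)%R; split; first exact: pow_R1_Rle.
move=> n n_gt0.
have small p e : prime p -> p < P0 -> (INR e.+1 <= c * Rpower (INR p) (INR e * eps))%R.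
  move=> p_prime _; apply: INR_succ_le_Rpower => //.
  by apply: (le_INR 2); apply/leP; apply: prime_gt1.
have large p e : prime p -> P0 <= p -> (INR e.+1 <= Rpower (INR p) (INR e * eps))%R.
  move=> p_prime P0_le_p; apply: INR_succ_le_Rpower_large.
    by apply/lt_0_INR/ltP/prime_gt0.
  have {}P0_le_p : (exp (ln 2 / eps) <= INR p)%R by move/leP/le_INR: P0_le_p; lra.
  have -> : 2%R = Rpower (exp (ln 2 / eps)) eps.
    have e_ln2 : (eps * (ln 2 / eps) = ln 2)%R by field; lra.
    by rewrite /Rpower ln_exp e_ln2 exp_ln //; lra.
  by apply: Rle_Rpower_l; [lra | split; [apply: exp_pos | ]].
have all_prime : all (fun f : nat * nat => prime f.1) (prime_decomp n).
  by apply/allP => -[p e] /mem_prime_decomp[].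
rewrite size_divisors.
apply: Rle_trans (INR_prod_succ_le c_ge1 small large _ all_prime) _.
rewrite -(prod_prime_decomp n_gt0).
apply: Rmult_le_compat_r; first exact/Rlt_le/Rpower_pos.
apply: Rle_pow => //; apply/leP; exact: count_small_primes.
Qed.

Definition Zdivisors (n : Z) : list Z := List.map Z.of_nat (divisors (Z.to_nat n)).

Lemma In_of_mem (s : seq nat) x : x \in s -> List.In x s.
Proof.
elim: s => [|y s IH] //=; rewrite in_cons => /orP[/eqP ->|x_in_s]; [by left | by right; apply: IH].
Qed.

Lemma Z_to_nat_dvdn (a b : Z) : (0 < a)%Z -> (0 <= b)%Z -> (a | b)%Z ->
  Z.to_nat a %| Z.to_nat b.
Proof.
move=> a_gt0 b_ge0 [q b_eq]; subst b.
by rewrite Z2Nat.inj_mul; [apply: dvdn_mull | nia | lia].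
Qed.

Lemma In_Zdivisors n d : (0 < n)%Z -> (0 < d)%Z -> (d | n)%Z -> List.In d (Zdivisors n).
Proof.
move=> n_gt0 d_gt0 d_dvd_n; rewrite -(Z2Nat.id d); last by lia.
apply/List.in_map/In_of_mem; rewrite -dvdn_divisors; last by apply/ltP; lia.
by apply: Z_to_nat_dvdn => //; lia.
Qed.

Lemma length_Zdivisors_dvd m n : (0 < m)%Z -> (0 < n)%Z -> (m | n)%Z ->
  (length (Zdivisors m) <= length (Zdivisors n))%coq_nat.
Proof.
move=> m_gt0 n_gt0 m_dvd_n; rewrite !List.length_map; apply/leP/size_divisors_dvd.
  by apply/ltP; lia.
by apply: Z_to_nat_dvdn => //; lia.
Qed.

Lemma length_Zdivisors_bound eps : (0 < eps)%R -> exists C : R, (1 <= C)%R /\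
  forall n, (0 < n)%Z -> (INR (length (Zdivisors n)) <= C * Rpower (IZR n) eps)%R.
Proof.
move=> eps_gt0; have [C [C_ge1 bound]] := size_divisors_bound _ eps_gt0.
exists C; split=> // n n_gt0; rewrite List.length_map.
have -> : IZR n = INR (Z.to_nat n) by rewrite INR_IZR_INZ Z2Nat.id //; lia.
by apply: bound; apply/ltP; lia.
Qed.
End DivisorCount.

Import DivisorCount.

(** * Lattice points on a circle *)

Section SumsOfTwoSquares.
Local Open Scope Z_scope.

Lemma sum_sq_eq0 a b : a * a + b * b = 0 -> a = 0 /\ b = 0.
Proof. nia. Qed.

Lemma Zgcd_1_of_divide h x m : (h | m) -> Z.gcd x m = 1 -> Z.gcd h x = 1.
Proof.
intros h_dvd_m x_m_coprime.
apply Zgcd_1_rel_prime, (rel_prime_div m); [|exact h_dvd_m].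
apply rel_prime_sym, Zgcd_1_rel_prime; exact x_m_coprime.
Qed.

Lemma Zdivide_mul_of_coprime a b x : (a | x) -> (b | x) -> Z.gcd a b = 1 -> (a * b | x).
Proof.
intros [u ->] b_dvd Hab.
assert (b_dvd_u : (b | u)).
{ apply Z.gauss with a; [now rewrite Z.mul_comm | now rewrite Z.gcd_comm]. }
destruct b_dvd_u as [v ->]. exists v. ring.
Qed.

Lemma Zgcd_sum_sq_l a b : Z.gcd a b = 1 -> Z.gcd a (a * a + b * b) = 1.
Proof.
intros Hab. rewrite Z.add_comm, Z.gcd_add_mult_diag_r.
apply Zgcd_1_rel_prime, rel_prime_mult; apply Zgcd_1_rel_prime; exact Hab.
Qed.

Lemma Zgcd_sum_sq_r a b : Z.gcd a b = 1 -> Z.gcd b (a * a + b * b) = 1.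
Proof. intros Hab. rewrite Z.add_comm. apply Zgcd_sum_sq_l. now rewrite Z.gcd_comm. Qed.

(* Squares are 0 or 1 mod 4, and a coprime pair is not both even. *)
Lemma coprime_sum_sq_not_div4 a b : Z.gcd a b = 1 -> ~ (4 | a * a + b * b).
Proof.
intros Hab [k Hk].
destruct (Z.Even_or_Odd a) as [[p ->]|[p ->]], (Z.Even_or_Odd b) as [[q ->]|[q ->]];
  try nia.
assert (two_dvd : (2 | Z.gcd (2 * p) (2 * q))).
{ apply Z.gcd_greatest; [exists p | exists q]; ring. }
rewrite Hab in two_dvd. apply Z.divide_pos_le in two_dvd; lia.
Qed.

Definition gauss_associates (a b : Z) : list (Z * Z) := [(a, b); (-a, -b); (-b, a); (b, -a)].

(* [(ad - bc)^2 + (ac + bd)^2 = m^2] forces [ad - bc] to be [0] or [+-m]. *)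
Lemma sum_sq_det_associates a b c d m : 0 < m ->
  a * a + b * b = m -> c * c + d * d = m -> (m | a * d - b * c) ->
  In (c, d) (gauss_associates a b).
Proof.
intros m_gt0 Hab Hcd [k Hk].
assert (lagrange : (a*d - b*c) * (a*d - b*c) + (a*c + b*d) * (a*c + b*d) = m * m).
{ rewrite <- Hab at 1. rewrite <- Hcd. ring. }
rewrite Hk in lagrange.
assert (k_sq : k * k * (m * m) <= 1 * (m * m)).
{ assert (0 <= (a*c + b*d) * (a*c + b*d)) by apply Z.square_nonneg.
  replace (k * m * (k * m)) with (k * k * (m * m)) in lagrange by ring. lia. }
apply Z.mul_le_mono_pos_r in k_sq; [|nia].
assert (k_small : k = 0 \/ k = 1 \/ k = -1) by nia.
unfold gauss_associates; simpl.
destruct k_small as [-> | [-> | ->]].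
- assert (dot : a*c + b*d = m \/ a*c + b*d = -m) by nia.
  destruct dot as [dot | dot].
  + left. assert (H : (a - c) * (a - c) + (b - d) * (b - d) = 0) by nia.
    apply sum_sq_eq0 in H. f_equal; lia.
  + right; left. assert (H : (a + c) * (a + c) + (b + d) * (b + d) = 0) by nia.
    apply sum_sq_eq0 in H. f_equal; lia.
- right; right; left. assert (H : (a - d) * (a - d) + (b + c) * (b + c) = 0) by nia.
  apply sum_sq_eq0 in H. f_equal; lia.
- right; right; right; left. assert (H : (a + d) * (a + d) + (b - c) * (b - c) = 0) by nia.
  apply sum_sq_eq0 in H. f_equal; lia.
Qed.

Lemma Zgcd_pos_r a m : 0 < m -> 0 < Z.gcd a m.
Proof.
intros m_gt0. pose proof (Z.gcd_nonneg a m).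
assert (Z.gcd a m <> 0) by (rewrite Z.gcd_eq_0; lia). lia.
Qed.

Lemma Zdivide_cofactor_gcd D E m : 0 < m -> (m | D * E) -> (m / Z.gcd D m | E).
Proof.
intros m_gt0 m_dvd.
pose proof (Zgcd_pos_r D m m_gt0) as g_gt0.
set (g := Z.gcd D m) in *.
assert (coprime : Z.gcd (D / g) (m / g) = 1) by (apply Z.gcd_div_gcd; [lia | reflexivity]).
destruct (Z.gcd_divide_l D m) as [D' HD]. destruct (Z.gcd_divide_r D m) as [m' Hm].
fold g in HD, Hm.
rewrite HD, Hm, !Z.div_mul in coprime by lia.
rewrite Hm, Z.div_mul by lia.
apply Z.gauss with D'; [|now rewrite Z.gcd_comm].
apply (Z.mul_divide_cancel_r _ _ g); [lia|].
replace (D' * E * g) with (D * E) by (rewrite HD; ring). now rewrite <- Hm.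
Qed.

Section PrimitiveRepresentations.

Variables (m a0 b0 : Z).
Hypotheses (m_gt0 : 0 < m) (rep0 : a0 * a0 + b0 * b0 = m) (prim0 : Z.gcd a0 b0 = 1).

(* Primitive representations with the same key are associates ([rep_key_det]), and keys
   are divisors of [m]. *)
Definition rep_key (p : Z * Z) : Z := Z.gcd (fst p * b0 - snd p * a0) m.

Lemma rep_key_pos p : 0 < rep_key p.
Proof. apply Zgcd_pos_r, m_gt0. Qed.

Lemma rep_key_mul_cofactor p : m = rep_key p * (m / rep_key p).
Proof.
pose proof (rep_key_pos p).
apply Z.div_exact; [lia|]. apply Z.mod_divide; [lia|]. apply Z.gcd_divide_r.
Qed.

Lemma rep_key_cofactor_divides a b : a * a + b * b = m ->
  (m / rep_key (a, b) | a * b0 + b * a0).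
Proof.
intros rep. unfold rep_key; cbn [fst snd]. apply Zdivide_cofactor_gcd; [exact m_gt0|].
exists (b0 * b0 - b * b).
transitivity ((a * a + b * b) * (b0 * b0) - (a0 * a0 + b0 * b0) * (b * b)); [ring|].
rewrite rep, rep0. ring.
Qed.

(* A common divisor of [g = rep_key (a, b)] and [m/g] divides [a b0 - b a0] and
   [a b0 + b a0], hence [2 b a0] and so [2]; but [4] does not divide [m]. *)
Lemma rep_key_coprime_cofactor a b : a * a + b * b = m -> Z.gcd a b = 1 ->
  Z.gcd (rep_key (a, b)) (m / rep_key (a, b)) = 1.
Proof.
intros rep prim.
pose proof (rep_key_mul_cofactor (a, b)) as m_eq.
set (g := rep_key (a, b)) in *.
set (h := Z.gcd g (m / g)).
assert (h_dvd_g : (h | g)) by apply Z.gcd_divide_l.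
assert (h_dvd_m : (h | m)) by (rewrite m_eq; apply Z.divide_mul_l; exact h_dvd_g).
assert (h_dvd_2 : (h | 2)).
{ assert (h_dvd_diff : (h | b * a0 * 2)).
  { replace (b * a0 * 2) with ((a * b0 + b * a0) - (a * b0 - b * a0)) by ring.
    apply Z.divide_sub_r.
    - apply Z.divide_trans with (m / g); [apply Z.gcd_divide_r|].
      apply rep_key_cofactor_divides; exact rep.
    - apply Z.divide_trans with g; [exact h_dvd_g | apply Z.gcd_divide_l]. }
  apply Z.gauss with (b * a0); [exact h_dvd_diff|].
  apply Zgcd_1_rel_prime, rel_prime_mult; apply Zgcd_1_rel_prime.
  - apply Zgcd_1_of_divide with m; [exact h_dvd_m|].
    rewrite <- rep. now apply Zgcd_sum_sq_r.
  - apply Zgcd_1_of_divide with m; [exact h_dvd_m|].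
    rewrite <- rep0. now apply Zgcd_sum_sq_l. }
assert (h_ne2 : h <> 2).
{ intros h2. apply (coprime_sum_sq_not_div4 a0 b0 prim0). rewrite rep0, m_eq.
  rewrite h2 in h_dvd_g. assert (h_dvd_cofactor : (2 | m / g)) by (rewrite <- h2; apply Z.gcd_divide_r).
  apply Z.divide_trans with (2 * (m / g)).
  - apply (Z.mul_divide_mono_l 2 (m / g) 2), h_dvd_cofactor.
  - apply Z.mul_divide_mono_r, h_dvd_g. }
assert (h_ne0 : h <> 0) by (intros h0; rewrite h0 in h_dvd_2; apply Z.divide_0_l in h_dvd_2; lia).
pose proof (Z.gcd_nonneg g (m / g)). apply Z.divide_pos_le in h_dvd_2; lia.
Qed.

Lemma rep_key_det a b c d :
  a * a + b * b = m -> Z.gcd a b = 1 -> c * c + d * d = m -> Z.gcd c d = 1 ->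
  rep_key (a, b) = rep_key (c, d) -> (m | a * d - b * c).
Proof.
intros rep_ab prim_ab rep_cd prim_cd same_key.
pose proof (rep_key_mul_cofactor (a, b)) as m_eq.
pose proof (rep_key_cofactor_divides a b rep_ab) as ab_dvd.
pose proof (rep_key_cofactor_divides c d rep_cd) as cd_dvd.
rewrite <- same_key in cd_dvd.
set (g := rep_key (a, b)) in *.
assert (g_dvd : (g | b0 * (a * d - b * c))).
{ replace (b0 * (a * d - b * c)) with ((a * b0 - b * a0) * d - (c * b0 - d * a0) * b) by ring.
  apply Z.divide_sub_r; apply Z.divide_mul_l.
  - apply Z.gcd_divide_l.
  - rewrite same_key. apply Z.gcd_divide_l. }
assert (cofactor_dvd : (m / g | b0 * (a * d - b * c))).
{ replace (b0 * (a * d - b * c)) with ((a * b0 + b * a0) * d - (c * b0 + d * a0) * b) by ring.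
  apply Z.divide_sub_r; apply Z.divide_mul_l.
  - exact ab_dvd.
  - exact cd_dvd. }
assert (m_dvd : (m | b0 * (a * d - b * c))).
{ rewrite m_eq. apply Zdivide_mul_of_coprime; [exact g_dvd | exact cofactor_dvd|].
  now apply rep_key_coprime_cofactor. }
apply Z.gauss with b0; [exact m_dvd|].
rewrite Z.gcd_comm, <- rep0. now apply Zgcd_sum_sq_r.
Qed.

End PrimitiveRepresentations.

Definition norm2 (p : Z * Z) : Z := fst p * fst p + snd p * snd p.

Lemma filter_filter_length_le {X} (p q : X -> bool) l :
  (length (filter p (filter q l)) <= length (filter p l))%nat.
Proof.
induction l as [|x l IH]; simpl; [lia|].
destruct (p x) eqn:px, (q x); simpl; rewrite ?px; simpl; lia.
Qed.

Lemma length_le_mul_keys {X} (key : X -> Z) (keys : list Z) (K : nat) (l : list X) :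
  (forall x, In x l -> In (key x) keys) ->
  (forall y, (length (filter (fun x => Z.eqb (key x) y) l) <= K)%nat) ->
  (length l <= K * length keys)%nat.
Proof.
revert l. induction keys as [|y keys IH]; intros l keyed fibers.
- destruct l as [|x l]; [simpl; lia|]. destruct (keyed x (or_introl eq_refl)).
- rewrite <- (filter_length (fun x => Z.eqb (key x) y) l).
  assert (rest : (length (filter (fun x => negb (Z.eqb (key x) y)) l) <= K * length keys)%nat).
  { apply IH.
    - intros x Hx. apply filter_In in Hx as [Hx key_ne].
      destruct (keyed x Hx) as [E|E]; [|exact E].
      rewrite E, Z.eqb_refl in key_ne. discriminate.
    - intros y'. eapply Nat.le_trans; [apply filter_filter_length_le | apply fibers]. }
  specialize (fibers y). simpl. lia.
Qed.

Lemma NoDup_length_le_pivot {X} (l : list X) (S : X -> list X) (K : nat) :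
  NoDup l -> (forall x, length (S x) = K) -> (forall x y, In x l -> In y l -> In y (S x)) ->
  (length l <= K)%nat.
Proof.
intros nodup S_len S_cover. destruct l as [|x l']; [simpl; lia|].
rewrite <- (S_len x). apply NoDup_incl_length; [exact nodup|].
intros y Hy. apply S_cover; [left; reflexivity | exact Hy].
Qed.

Lemma primitive_reps_length_le m l : 0 < m -> NoDup l ->
  (forall x, In x l -> norm2 x = m /\ Z.gcd (fst x) (snd x) = 1) ->
  (length l <= 4 * length (Zdivisors m))%nat.
Proof.
intros m_gt0 nodup reps.
destruct l as [|[a0 b0] l']; [simpl; lia|].
destruct (reps (a0, b0) (or_introl eq_refl)) as [rep0 prim0].
apply (length_le_mul_keys (rep_key m a0 b0)).
- intros x _. apply In_Zdivisors; [exact m_gt0 | apply Zgcd_pos_r, m_gt0 | apply Z.gcd_divide_r].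
- intros y. apply (NoDup_length_le_pivot _ (fun p => gauss_associates (fst p) (snd p))).
  + apply NoDup_filter, nodup.
  + reflexivity.
  + intros [a b] [c d] ab_in cd_in.
    apply filter_In in ab_in as [ab_in key_ab], cd_in as [cd_in key_cd].
    apply Z.eqb_eq in key_ab, key_cd.
    destruct (reps _ ab_in) as [rep_ab prim_ab], (reps _ cd_in) as [rep_cd prim_cd].
    apply (sum_sq_det_associates a b c d m m_gt0 rep_ab rep_cd).
    apply (rep_key_det m a0 b0); auto. congruence.
Qed.

Lemma gcd_pos_of_rep n x : 0 < n -> norm2 x = n -> 0 < Z.gcd (fst x) (snd x).
Proof.
intros n_gt0 rep. pose proof (Z.gcd_nonneg (fst x) (snd x)).
enough (Z.gcd (fst x) (snd x) <> 0) by lia.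
rewrite Z.gcd_eq_0. intros [a0 b0]. unfold norm2 in rep. rewrite a0, b0 in rep. lia.
Qed.

Lemma scaled_reps_length_le n y l : 0 < n -> NoDup l ->
  (forall x, In x l -> norm2 x = n /\ Z.gcd (fst x) (snd x) = y) ->
  (length l <= 4 * length (Zdivisors n))%nat.
Proof.
intros n_gt0 nodup reps.
destruct l as [|x0 l']; [simpl; lia|].
assert (y_gt0 : 0 < y).
{ destruct (reps x0 (or_introl eq_refl)) as [rep <-]. exact (gcd_pos_of_rep n x0 n_gt0 rep). }
set (l := x0 :: l') in *.
assert (scaled : forall x, In x l -> x = (y * (fst x / y), y * (snd x / y))).
{ intros [a b] x_in. destruct (reps _ x_in) as [_ gcd_y]; simpl in *.
  rewrite <- !Zdivide_Zdiv_eq; [reflexivity | exact y_gt0 | rewrite <- gcd_y; apply Z.gcd_divide_r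
  | exact y_gt0 | rewrite <- gcd_y; apply Z.gcd_divide_l]. }
set (m := norm2 (fst x0 / y, snd x0 / y)).
assert (n_eq : n = y * y * m).
{ destruct (reps x0 (or_introl eq_refl)) as [<- _]. rewrite (scaled x0) at 1 by (left; reflexivity).
  unfold m, norm2; simpl. ring. }
assert (m_gt0 : 0 < m) by nia.
set (prim := map (fun x => (fst x / y, snd x / y)) l).
replace (length l) with (length prim) by apply length_map.
apply Nat.le_trans with (4 * length (Zdivisors m))%nat.
- apply primitive_reps_length_le; [exact m_gt0 | |].
  + apply NoDup_map_NoDup_ForallPairs; [|exact nodup].
    intros x x' x_in x'_in same. rewrite (scaled x x_in), (scaled x' x'_in).
    injection same as -> ->. reflexivity.
  + intros x' x'_in. apply in_map_iff in x'_in as [x [<- x_in]].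
    destruct (reps x x_in) as [rep_n gcd_y]. split.
    * apply (Z.mul_cancel_l _ _ (y * y)); [nia|]. rewrite <- n_eq, <- rep_n.
      rewrite (scaled x x_in) at 3. unfold norm2; simpl. ring.
    * simpl. apply Z.gcd_div_gcd; [lia | symmetry; exact gcd_y].
- apply Nat.mul_le_mono_l, length_Zdivisors_dvd; [exact m_gt0 | exact n_gt0 |].
  exists (y * y). lia.
Qed.

Lemma reps_length_le n l : 0 < n -> NoDup l -> (forall x, In x l -> norm2 x = n) ->
  (length l <= 4 * length (Zdivisors n) * length (Zdivisors n))%nat.
Proof.
intros n_gt0 nodup reps.
apply (length_le_mul_keys (fun x => Z.gcd (fst x) (snd x))).
- intros x x_in. apply In_Zdivisors; [exact n_gt0 | exact (gcd_pos_of_rep n x n_gt0 (reps x x_in)) |].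
  rewrite <- (reps x x_in). unfold norm2.
  apply Z.divide_add_r; apply Z.divide_mul_l; [apply Z.gcd_divide_l | apply Z.gcd_divide_r].
- intros y. apply (scaled_reps_length_le n y); [exact n_gt0 | apply NoDup_filter, nodup |].
  intros x x_in. apply filter_In in x_in as [x_in key_x].
  split; [exact (reps x x_in) | now apply Z.eqb_eq].
Qed.

End SumsOfTwoSquares.

Definition lattice_circle_bound (C eps : R) : Prop :=
  forall (n : Z) (T : R) (l : list (Z * Z)), NoDup l -> (forall x, In x l -> norm2 x = n) ->
  IZR n + 1 <= T -> INR (length l) <= C * Rpower T eps.

Lemma Rpower_half_sq x e : Rpower x (e / 2) * Rpower x (e / 2) = Rpower x e.
Proof. rewrite <- Rpower_plus. f_equal. field. Qed.

Lemma reps_length_Rpower_bound C0 eps n l :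
  (forall n, (0 < n)%Z -> INR (length (Zdivisors n)) <= C0 * Rpower (IZR n) (eps / 2)) ->
  (0 < n)%Z -> NoDup l -> (forall x, In x l -> norm2 x = n) ->
  INR (length l) <= 4 * (C0 * C0) * Rpower (IZR n) eps.
Proof.
intros divisor_bound n_gt0 nodup circle.
pose proof (reps_length_le n l n_gt0 nodup circle) as count.
apply le_INR in count. rewrite !mult_INR in count. replace (INR 4) with 4 in count by (simpl; lra).
pose proof (divisor_bound n n_gt0) as d_le.
pose proof (pos_INR (length (Zdivisors n))) as d_ge0.
eapply Rle_trans; [exact count|]. rewrite Rmult_assoc, (Rmult_assoc 4).
apply Rmult_le_compat_l; [lra|].
rewrite <- Rpower_half_sq.
replace (C0 * C0 * _) with ((C0 * Rpower (IZR n) (eps / 2)) * (C0 * Rpower (IZR n) (eps / 2))) by ring.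
apply Rmult_le_compat; assumption.
Qed.

Lemma exists_lattice_circle_bound eps : 0 < eps ->
  exists C, 1 <= C /\ lattice_circle_bound C eps.
Proof.
intros eps_gt0.
destruct (length_Zdivisors_bound (eps / 2)) as [C0 [C0_ge1 divisor_bound]]; [lra|].
exists (4 * (C0 * C0)). split; [nra|].
intros n T l nodup circle T_ge.
pose proof (Rpower_pos T eps) as T_pow_pos.
destruct l as [|x0 l']; [simpl; nra|].
assert (n_ge0 : (0 <= n)%Z) by (rewrite <- (circle x0 (or_introl eq_refl)); unfold norm2; nia).
destruct (Z.eq_dec n 0) as [-> | n_ne0].
- assert (T_ge1 : 1 <= T) by (simpl in T_ge; lra).
  assert (single : (length (x0 :: l') <= 1)%nat).
  { change 1%nat with (length [(0%Z, 0%Z)]). apply NoDup_incl_length; [exact nodup|].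
    intros [a b] ab_in. apply circle in ab_in. unfold norm2 in ab_in; simpl in ab_in.
    apply sum_sq_eq0 in ab_in as [-> ->]. left; reflexivity. }
  apply le_INR in single. rewrite INR_1 in single.
  pose proof (Rpower_ge1 T eps T_ge1 (Rlt_le _ _ eps_gt0)). nra.
- eapply Rle_trans; [apply (reps_length_Rpower_bound C0); auto; lia|].
  apply Rmult_le_compat_l; [nra|]. apply Rle_Rpower_l; [lra|].
  split; [apply IZR_lt; lia | lra].
Qed.

(** * Summation over level sets *)

Section LevelSets.

Context {X : Type} (j : X -> nat).

Definition level_count (A : list X) (k : nat) : nat :=
  length (filter (fun x => Nat.eqb (j x) k) A).

Definition sum_inv_succ (A : list X) : R :=
  fold_right (fun x acc => / (INR (j x) + 1) + acc) 0 A.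

Lemma sum_f_R0_indicator (k : nat) (g : nat -> R) (L : nat) :
  sum_f_R0 (fun i => if Nat.eqb k i then g i else 0) L = if Nat.leb k L then g k else 0.
Proof.
induction L as [|L IH]; simpl.
- destruct k; reflexivity.
- rewrite IH. destruct (Nat.eqb_spec k (S L)) as [-> | ne].
  + rewrite Nat.leb_refl, (proj2 (Nat.leb_gt (S L) L)) by lia. ring.
  + destruct (Nat.leb_spec k L), (Nat.leb_spec k (S L)); try lia; ring.
Qed.

(* Each [x] with [j x <= L] is counted in its level, the others contribute at most [1/(L+1)]. *)
Lemma sum_inv_succ_le_levels (L : nat) (A : list X) :
  sum_inv_succ A <=
  sum_f_R0 (fun k => INR (level_count A k) / (INR k + 1)) L + INR (length A) / (INR L + 1).
Proof.
assert (L_pos : 0 < INR L + 1) by (pose proof (pos_INR L); lra).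
induction A as [|x A IH].
- unfold sum_inv_succ, level_count; simpl. rewrite Rdiv_0_l, Rplus_0_r.
  apply cond_pos_sum. intros k. rewrite Rdiv_0_l. lra.
- assert (levels_cons : sum_f_R0 (fun k => INR (level_count (x :: A) k) / (INR k + 1)) L =
     sum_f_R0 (fun k => INR (level_count A k) / (INR k + 1)) L +
     sum_f_R0 (fun k => if Nat.eqb (j x) k then / (INR k + 1) else 0) L).
  { rewrite <- sum_plus. apply sum_eq. intros k _. unfold level_count. cbn [filter].
    destruct (Nat.eqb (j x) k); cbn [length]; [rewrite S_INR|]; unfold Rdiv; ring. }
  rewrite levels_cons, sum_f_R0_indicator.
  change (sum_inv_succ (x :: A)) with (/ (INR (j x) + 1) + sum_inv_succ A).
  change (length (x :: A)) with (S (length A)). rewrite S_INR.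
  assert (0 <= / (INR L + 1)) by (left; apply Rinv_0_lt_compat; lra).
  destruct (Nat.leb_spec (j x) L) as [_ | jx_gt].
  + unfold Rdiv in *. lra.
  + assert (/ (INR (j x) + 1) <= / (INR L + 1)).
    { apply Rinv_le_contravar; [lra|]. apply le_INR in jx_gt. rewrite S_INR in jx_gt. lra. }
    unfold Rdiv in *. lra.
Qed.

End LevelSets.

Lemma ln_le_sub1 y : 0 < y -> ln y <= y - 1.
Proof. intros y_pos. pose proof (exp_ineq1_le (ln y)) as ineq. rewrite exp_ln in ineq by lra. lra. Qed.

Lemma harmonic_le_ln L : sum_f_R0 (fun k => / (INR k + 1)) L <= 1 + ln (INR L + 1).
Proof.
induction L as [|L IH].
- simpl. rewrite Rplus_0_l, ln_1. lra.
- rewrite tech5, S_INR.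
  assert (L_pos : 0 < INR L + 1) by (pose proof (pos_INR L); lra).
  assert (step : / (INR L + 1 + 1) <= ln (INR L + 1 + 1) - ln (INR L + 1)).
  { assert (ratio_pos : 0 < (INR L + 1) / (INR L + 1 + 1)) by (apply Rdiv_lt_0_compat; lra).
    pose proof (ln_le_sub1 _ ratio_pos) as H.
    unfold Rdiv in H. rewrite ln_mult, ln_Rinv in H by (try apply Rinv_0_lt_compat; lra).
    replace ((INR L + 1) * / (INR L + 1 + 1) - 1) with (- / (INR L + 1 + 1)) in H by (field; lra).
    lra. }
  lra.
Qed.

Lemma sum_inv_succ_le_harmonic {X} (j : X -> nat) (A : list X) (B : R) :
  (forall k, (k <= length A)%nat -> INR (level_count j A k) <= B) ->
  sum_inv_succ j A <= B * (1 + ln (INR (length A) + 1)) + 1.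
Proof.
intros levels.
assert (L_pos : 0 < INR (length A) + 1) by (pose proof (pos_INR (length A)); lra).
assert (B_ge0 : 0 <= B) by (eapply Rle_trans; [apply pos_INR | apply (levels 0%nat); lia]).
eapply Rle_trans; [apply (sum_inv_succ_le_levels j (length A))|].
apply Rplus_le_compat.
- eapply Rle_trans; [|apply Rmult_le_compat_l; [exact B_ge0 | apply harmonic_le_ln]].
  rewrite scal_sum. apply sum_Rle. intros k k_le. unfold Rdiv. rewrite Rmult_comm.
  apply Rmult_le_compat_l; [left; apply Rinv_0_lt_compat; pose proof (pos_INR k); lra|].
  apply levels, k_le.
- unfold Rdiv. apply Rmult_le_reg_r with (INR (length A) + 1); [exact L_pos|].
  rewrite Rmult_assoc, Rinv_l by lra. lra.
Qed.

(** * Lattice points near the Fermi circle *)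

Definition inv_dist_sum (X : R) (A : list (Z * Z)) : R :=
  fold_right (fun p acc => / Rabs (IZR (norm2 p) - X) + acc) 0 A.

Lemma dist_succ_le (X : R) (n c : Z) : 1 / 2 <= Rabs (IZR n - X) -> Rabs (IZR c - X) <= 1 / 2 ->
  INR (Z.abs_nat (n - c)) + 1 <= 4 * Rabs (IZR n - X).
Proof.
intros n_far c_near.
rewrite INR_IZR_INZ, Nat2Z.inj_abs_nat.
assert (triangle : IZR (Z.abs (n - c)) <= Rabs (IZR n - X) + 1 / 2).
{ rewrite abs_IZR, minus_IZR.
  replace (IZR n - IZR c) with ((IZR n - X) - (IZR c - X)) by ring.
  eapply Rle_trans; [apply Rabs_triang|]. rewrite Rabs_Ropp. lra. }
destruct (Z.eq_dec (n - c) 0) as [E | E].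
- rewrite E. simpl. lra.
- assert (1 <= IZR (Z.abs (n - c))) by (apply IZR_le; lia). lra.
Qed.

Lemma inv_dist_le_inv_succ X c A :
  (forall p, 1 / 2 <= Rabs (IZR (norm2 p) - X)) -> Rabs (IZR c - X) <= 1 / 2 ->
  inv_dist_sum X A <= 4 * sum_inv_succ (fun p => Z.abs_nat (norm2 p - c)) A.
Proof.
intros gap c_near. induction A as [|p A IH]; [unfold inv_dist_sum, sum_inv_succ; simpl; lra|].
cbn [inv_dist_sum sum_inv_succ fold_right]. fold (inv_dist_sum X A).
fold (sum_inv_succ (fun p => Z.abs_nat (norm2 p - c)) A).
pose proof (dist_succ_le X (norm2 p) c (gap p) c_near) as le.
pose proof (pos_INR (Z.abs_nat (norm2 p - c))).
assert (/ Rabs (IZR (norm2 p) - X) <= 4 * / (INR (Z.abs_nat (norm2 p - c)) + 1)).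
{ replace (/ Rabs (IZR (norm2 p) - X)) with (4 * / (4 * Rabs (IZR (norm2 p) - X))).
  - apply Rmult_le_compat_l; [lra|]. apply Rinv_le_contravar; lra.
  - rewrite Rinv_mult. field. specialize (gap p). lra. }
lra.
Qed.

Lemma filter_length_le_or {X} (p q1 q2 : X -> bool) (l : list X) :
  (forall x, p x = true -> q1 x = true \/ q2 x = true) ->
  (length (filter p l) <= length (filter q1 l) + length (filter q2 l))%nat.
Proof.
intros cover. induction l as [|x l IH]; simpl; [lia|].
destruct (p x) eqn:px.
- destruct (cover x px) as [E | E]; rewrite E; [destruct (q2 x) | destruct (q1 x)]; simpl; lia.
- destruct (q1 x), (q2 x); simpl; lia.
Qed.

Lemma circle_filter_length_le C eps A n T : lattice_circle_bound C eps -> NoDup A ->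
  IZR n + 1 <= T -> INR (length (filter (fun p => Z.eqb (norm2 p) n) A)) <= C * Rpower T eps.
Proof.
intros circles nodup n_le. apply (circles n); [apply NoDup_filter, nodup | | exact n_le].
intros x x_in. apply filter_In in x_in as [_ E]. now apply Z.eqb_eq.
Qed.

(* The [k]-th level of [|norm2 p - c|] lies on the two circles [norm2 p = c + k] and [c - k]. *)
Lemma level_count_dist_le C eps A c k T : lattice_circle_bound C eps -> NoDup A ->
  IZR c + INR k + 1 <= T ->
  INR (level_count (fun p => Z.abs_nat (norm2 p - c)) A k) <= 2 * (C * Rpower T eps).
Proof.
intros circles nodup k_le. unfold level_count.
eapply Rle_trans.
- apply le_INR, (filter_length_le_or _ (fun p => Z.eqb (norm2 p) (c + Z.of_nat k))
    (fun p => Z.eqb (norm2 p) (c - Z.of_nat k))).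
  intros x level_x. apply Nat.eqb_eq in level_x.
  rewrite !Z.eqb_eq. lia.
- rewrite plus_INR. rewrite INR_IZR_INZ in k_le.
  pose proof (circle_filter_length_le C eps A (c + Z.of_nat k) T circles nodup) as upper.
  pose proof (circle_filter_length_le C eps A (c - Z.of_nat k) T circles nodup) as lower.
  rewrite plus_IZR in upper. rewrite minus_IZR in lower.
  assert (0 <= IZR (Z.of_nat k)) by (apply IZR_le; lia).
  specialize (upper ltac:(lra)). specialize (lower ltac:(lra)). lra.
Qed.

Lemma inv_dist_sum_bound eps : 0 < eps -> exists K, 0 < K /\
  forall X A, 0 <= X -> NoDup A -> (forall p, 1 / 2 <= Rabs (IZR (norm2 p) - X)) ->
  inv_dist_sum X A <= K * Rpower (X + INR (length A) + 2) eps.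
Proof.
intros eps_gt0. set (e := eps / 2).
assert (e_gt0 : 0 < e) by (unfold e; lra).
destruct (exists_lattice_circle_bound e e_gt0) as [C [C_ge1 circles]].
exists (4 * (2 * C * (1 + / e) + 1)).
assert (inv_e_pos : 0 < / e) by (apply Rinv_0_lt_compat; lra).
split; [nra|].
intros X A X_ge0 nodup gap.
set (Q := X + INR (length A) + 2).
pose proof (pos_INR (length A)) as L_ge0.
assert (Q_ge1 : 1 <= Q) by (unfold Q; lra).
pose proof (Rpower_ge1 Q e Q_ge1 (Rlt_le _ _ e_gt0)) as Qe_ge1.
destruct (archimed (X - 1 / 2)) as [c_gt c_le]. set (c := up (X - 1 / 2)) in *.
assert (c_near : Rabs (IZR c - X) <= 1 / 2) by (apply Rabs_le; lra).
assert (levels : forall k, (k <= length A)%nat ->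
  INR (level_count (fun p => Z.abs_nat (norm2 p - c)) A k) <= 2 * (C * Rpower Q e)).
{ intros k k_le. apply level_count_dist_le; [exact circles | exact nodup |].
  apply le_INR in k_le. unfold Q. lra. }
assert (log_bound : ln (INR (length A) + 1) <= Rpower Q e / e).
{ apply Rle_trans with (ln Q); [apply ln_le_compat; unfold Q; lra|].
  apply ln_le_Rpower_div; lra. }
assert (Q_sq : Rpower Q eps = Rpower Q e * Rpower Q e) by (unfold e; symmetry; apply Rpower_half_sq).
eapply Rle_trans; [apply (inv_dist_le_inv_succ X c A gap c_near)|].
eapply Rle_trans; [apply Rmult_le_compat_l; [lra | apply (sum_inv_succ_le_harmonic _ A _ levels)]|].
fold Q. rewrite Q_sq. set (P := Rpower Q e) in *. unfold Rdiv in log_bound.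
assert (log_factor : 1 + ln (INR (length A) + 1) <= (1 + / e) * P) by nra.
assert (C * P * (1 + ln (INR (length A) + 1)) <= C * (1 + / e) * (P * P)).
{ replace (C * (1 + / e) * (P * P)) with (C * P * ((1 + / e) * P)) by ring.
  apply Rmult_le_compat_l; [nra | exact log_factor]. }
nra.
Qed.

(** * The Fermi ball *)

Lemma znorm_sq p : znorm p ^ 2 = IZR (norm2 p).
Proof.
unfold znorm, norm2. rewrite pow2_sqrt.
- rewrite plus_IZR, !mult_IZR. ring.
- pose proof (pow2_ge_0 (IZR (fst p))). pose proof (pow2_ge_0 (IZR (snd p))). lra.
Qed.

Lemma znorm_nonneg p : 0 <= znorm p.
Proof. apply sqrt_pos. Qed.

Lemma znorm_lt_iff p r : 0 <= r -> (znorm p < r <-> IZR (norm2 p) < r ^ 2).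
Proof.
intros r_ge0. rewrite <- znorm_sq. pose proof (znorm_nonneg p) as norm_ge0.
split; intros lt; [nra|].
destruct (Rlt_le_dec (znorm p) r) as [lt_r | ge_r]; [exact lt_r | nra].
Qed.

Definition max_norm2 (l : list (Z * Z)) : Z := fold_right (fun q acc => Z.max (norm2 q) acc) 0%Z l.

Lemma norm2_le_max_norm2 l q : In q l -> (norm2 q <= max_norm2 l)%Z.
Proof. induction l as [|x l IH]; simpl; [tauto|]. intros [-> | q_in]; [lia | specialize (IH q_in); lia]. Qed.

Lemma max_norm2_attained l : max_norm2 l = 0%Z \/ exists q, In q l /\ max_norm2 l = norm2 q.
Proof.
induction l as [|x l IH]; simpl; [left; reflexivity|].
destruct (Z.max_spec (norm2 x) (max_norm2 l)) as [[_ ->] | [_ ->]]; [|right; exists x; auto].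
destruct IH as [IH | [q [q_in E]]]; [left; exact IH | right; exists q; auto].
Qed.

(* With [s] the largest [|q|^2] inside [B_F], every [|p|^2] outside is at least [s + 1],
   so [kF^2] is at distance at least [1/2] from every integer [|p|^2]. *)
Lemma fermi_gap kF N : fermi_momentum kF -> has_card (inBF kF) N ->
  forall p, 1 / 2 <= Rabs (IZR (norm2 p) - kF ^ 2).
Proof.
intros [kF_pos [i [s [[inf_lb inf_glb] [[sup_ub sup_lub] kF_mid]]]]] [ball [_ [ball_spec _]]].
set (S0 := max_norm2 ball).
assert (S0_lt : IZR S0 < kF ^ 2).
{ destruct (max_norm2_attained ball) as [E | [q [q_in E]]]; unfold S0; rewrite E.
  - simpl. nra.
  - apply ball_spec in q_in. apply (znorm_lt_iff q kF); [lra | exact q_in]. }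
assert (s_le : s <= IZR S0).
{ apply sup_lub. intros x [q [q_in ->]]. rewrite znorm_sq. apply IZR_le, norm2_le_max_norm2, ball_spec, q_in. }
assert (i_ge : IZR S0 + 1 <= i).
{ apply inf_glb. intros x [p [p_out ->]]. rewrite znorm_sq, <- plus_IZR. apply IZR_le.
  assert (S0_lt_p : IZR S0 < IZR (norm2 p)).
  { enough (kF ^ 2 <= IZR (norm2 p)) by lra.
    destruct (Rle_lt_dec (kF ^ 2) (IZR (norm2 p))) as [le | lt]; [exact le|].
    exfalso. apply p_out, (znorm_lt_iff p kF); [lra | exact lt]. }
  apply lt_IZR in S0_lt_p. lia. }
intros p. destruct (Rlt_dec (znorm p) kF) as [p_in | p_out].
- assert (IZR (norm2 p) <= s) by (apply sup_ub; exists p; split; [exact p_in | symmetry; apply znorm_sq]).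
  rewrite Rabs_left1; lra.
- assert (i <= IZR (norm2 p)) by (apply inf_lb; exists p; split; [exact p_out | symmetry; apply znorm_sq]).
  rewrite Rabs_right; lra.
Qed.

Definition zinterval (a : nat) : list Z :=
  map (fun i => Z.of_nat i - Z.of_nat a)%Z (seq 0 (2 * a + 1)).

Lemma In_zinterval a x : (- Z.of_nat a <= x <= Z.of_nat a)%Z -> In x (zinterval a).
Proof.
intros x_range. apply in_map_iff. exists (Z.to_nat (x + Z.of_nat a)).
split; [rewrite Z2Nat.id; lia | apply in_seq; lia].
Qed.

Lemma length_zinterval a : length (zinterval a) = (2 * a + 1)%nat.
Proof. unfold zinterval. now rewrite length_map, length_seq. Qed.

Lemma NoDup_zinterval a : NoDup (zinterval a).
Proof.
apply NoDup_map_NoDup_ForallPairs; [|apply seq_NoDup].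
intros i i' _ _ same. lia.
Qed.

(* [B_F] contains the [2b + 1] points [(x, 0)] with [|x| <= b := ceil(kF/2) - 1]. *)
Lemma card_fermi_ball_bound kF N : 0 < kF -> has_card (inBF kF) N ->
  1 <= INR N /\ kF <= INR N + 1.
Proof.
intros kF_pos [ball [_ [ball_spec ball_len]]].
destruct (archimed (kF / 2)) as [up_gt up_le].
assert (up_pos : (0 < up (kF / 2))%Z) by (apply lt_IZR; lra).
set (b := Z.to_nat (up (kF / 2) - 1)).
assert (b_eq : IZR (Z.of_nat b) = IZR (up (kF / 2)) - 1) by (unfold b; rewrite Z2Nat.id, minus_IZR by lia; reflexivity).
set (axis := map (fun x => (x, 0%Z)) (zinterval b)).
assert (axis_nodup : NoDup axis).
{ apply NoDup_map_NoDup_ForallPairs; [|apply NoDup_zinterval].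
  intros x y _ _ same. injection same; auto. }
assert (axis_incl : incl axis ball).
{ intros p p_in. apply in_map_iff in p_in as [x [<- x_in]].
  apply in_map_iff in x_in as [i [<- i_in]]. apply in_seq in i_in.
  apply ball_spec. unfold inBF. apply znorm_lt_iff; [lra|].
  unfold norm2; simpl fst; simpl snd.
  assert (sq : ((Z.of_nat i - Z.of_nat b) * (Z.of_nat i - Z.of_nat b) + 0 * 0
                <= Z.of_nat b * Z.of_nat b)%Z) by nia.
  apply IZR_le in sq. rewrite mult_IZR in sq.
  assert (0 <= IZR (Z.of_nat b)) by (apply IZR_le; lia). nra. }
pose proof (NoDup_incl_length axis_nodup axis_incl) as len.
unfold axis in len. rewrite length_map, length_zinterval, ball_len in len.
apply le_INR in len. rewrite plus_INR, mult_INR, (INR_IZR_INZ b), b_eq, INR_1 in len.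
replace (INR 2) with 2 in len by (simpl; lra).
assert (1 <= IZR (up (kF / 2))) by (apply IZR_le; lia). lra.
Qed.

Lemma card_disc_bound r M : 0 <= r -> has_card (fun p => znorm p <= r) M ->
  INR M <= (2 * r + 3) ^ 2.
Proof.
intros r_ge0 [disc [disc_nodup [disc_spec disc_len]]].
destruct (archimed r) as [up_gt up_le].
assert (up_pos : (0 < up r)%Z) by (apply lt_IZR; lra).
set (a := Z.to_nat (up r)).
assert (a_eq : IZR (Z.of_nat a) = IZR (up r)) by (unfold a; rewrite Z2Nat.id by lia; reflexivity).
assert (disc_incl : incl disc (list_prod (zinterval a) (zinterval a))).
{ intros [x y] p_in. apply disc_spec in p_in.
  pose proof (znorm_nonneg (x, y)) as norm_ge0.
  assert (norm_le : IZR (norm2 (x, y)) <= r ^ 2) by (rewrite <- znorm_sq; nra).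
  unfold norm2 in norm_le; simpl in norm_le. rewrite plus_IZR, !mult_IZR in norm_le.
  assert (coord_bound : forall z w, IZR z * IZR z + IZR w * IZR w <= r ^ 2 ->
            (- Z.of_nat a <= z <= Z.of_nat a)%Z).
  { intros z w zw_le. assert (z_range : - IZR (up r) < IZR z < IZR (up r)) by nra.
    rewrite <- a_eq in z_range. split; apply le_IZR; rewrite ?opp_IZR; lra. }
  apply in_prod; apply In_zinterval; [apply (coord_bound x y) | apply (coord_bound y x)]; lra. }
pose proof (NoDup_incl_length disc_nodup disc_incl) as len.
rewrite length_prod, length_zinterval, disc_len in len.
apply le_INR in len. rewrite mult_INR, plus_INR, mult_INR, (INR_IZR_INZ a), a_eq, INR_1 in len.
replace (INR 2) with 2 in len by (simpl; lra).
assert (0 <= 2 * IZR (up r) + 1) by lra.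
assert (2 * IZR (up r) + 1 <= 2 * r + 3) by lra.
nra.
Qed.

Lemma hbar_sq_sum_inv_e N kF A : (0 < N)%nat ->
  hbar N ^ 2 * sum_inv_e N kF A = inv_dist_sum (kF ^ 2) A.
Proof.
intros N_pos. apply lt_0_INR in N_pos.
assert (hbar_sq : hbar N ^ 2 = / INR N).
{ unfold hbar. rewrite pow_inv, <- Rsqr_pow2, Rsqr_sqrt; lra. }
induction A as [|p A IH]; [unfold sum_inv_e, inv_dist_sum; simpl; ring|].
unfold sum_inv_e, inv_dist_sum in *; cbn [fold_right].
rewrite Rmult_plus_distr_l, IH. unfold e_kin.
rewrite znorm_sq, Rinv_mult, hbar_sq, Rinv_inv, <- Rmult_assoc, Rinv_l, Rmult_1_l by lra.
reflexivity.
Qed.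

Lemma Rpower_mult_sq a x e : 0 < a -> 0 < x -> Rpower (a * x ^ 2) (e / 2) = Rpower a (e / 2) * Rpower x e.
Proof.
intros a_pos x_pos. rewrite <- Rpower_mult_distr by (try apply pow_lt; lra).
f_equal. rewrite <- (Rpower_pow 2 x x_pos), Rpower_mult. f_equal. simpl. field.
Qed.

Theorem lemmaA3 :
  forall eps : R, 0 < eps ->
  exists C : R, 0 < C /\
    forall (kF : R) (N M : nat),
      fermi_momentum kF ->
      has_card (inBF kF) N ->
      has_card (fun p => znorm p <= 2 * kF) M ->
      forall A : list (Z * Z), NoDup A -> (length A <= M)%nat ->
        hbar N ^ 2 * sum_inv_e N kF A <= C * Rpower (INR N) eps.
Proof.
intros eps eps_pos.
destruct (inv_dist_sum_bound (eps / 2)) as [K [K_pos bound]]; [lra|].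
exists (K * Rpower 127 (eps / 2)). split; [apply Rmult_lt_0_compat; [exact K_pos | apply Rpower_pos]|].
intros kF N M fermi ball disc A nodup A_le_M.
assert (kF_pos : 0 < kF) by apply fermi.
destruct (card_fermi_ball_bound kF N kF_pos ball) as [N_ge1 kF_le].
pose proof (card_disc_bound (2 * kF) M ltac:(lra) disc) as M_le.
apply le_INR in A_le_M.
(* [kF <= 2 N] and [|A| <= M <= (4 kF + 3)^2 <= 121 N^2]. *)
assert (size : kF ^ 2 + INR (length A) + 2 <= 127 * INR N ^ 2) by nra.
rewrite hbar_sq_sum_inv_e by (apply INR_lt; simpl; lra).
eapply Rle_trans; [apply bound; [nra | exact nodup | exact (fermi_gap kF N fermi ball)]|].
rewrite Rmult_assoc, <- Rpower_mult_sq by lra.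
apply Rmult_le_compat_l; [lra|]. apply Rle_Rpower_l; [lra|].
split; [pose proof (pos_INR (length A)); nra | exact size].
Qed.
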